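(* Let $p=2$ and assume $\mu^1,\dots,\mu^N$ are not all equal. Let $\tilde\nu=\sum_{i=1}^N\lambda_i\sum_{k=1}^{n_i}\mu^i_k\delta(m^i_k)$ be the output of the pairwise algorithm, where $$m^i_k=\sum_{j=1}^N\lambda_j\sum_{l=1}^{n_j}\frac{\pi^{ij}_{k,l}}{\mu^i_k}x^j_l.$$ Then for any optimal barycenter $\hat\nu$ (minimizer of $\Psi_2$), $$\frac{\Psi_2(\tilde\nu)}{\Psi_2(\hat\nu)}\le2-\frac{\sum_{i=1}^N\lambda_i\sum_{k=1}^{n_i}\mu^i_k\|m^i_k-x^i_k\|^2}{\sum_{1\le i<j\le N}\lambda_i\lambda_j\mathcal{W}_2^2(\mu^i,\mu^j)}.$$
   Context: $\|\cdot\|$ is the Euclidean norm on $\mathbb{R}^d$. For finitely supported probability measures $\mu,\nu$ on $\mathbb{R}^d$, $\mathcal{W}_2^2(\mu,\nu)\coloneqq\min_{\pi\in\Pi(\mu,\nu)}\int\|x-y\|^2\,d\pi$, with $\Pi(\mu,\nu)$ the set of couplings. Fix $N\ge2$, $\lambda\in\Delta_N\coloneqq\{\lambda\in(0,1)^N:\sum_i\lambda_i=1\}$, and discrete probability measures $\mu^i=\sum_{l=1}^{n_i}\mu^i_l\delta(x^i_l)$, $i=1,\dots,N$, with positive weights and pairwise distinct points for each $i$. $\Psi_2(\nu)\coloneqq\sum_{i=1}^N\lambda_i\mathcal{W}_2^2(\nu,\mu^i)$. Plans of the pairwise algorithm: $\pi^{ii}\coloneqq\sum_k\mu^i_k\delta(x^i_k,x^i_k)$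 (so $\pi^{ii}_{k,l}=\mu^i_k$ if $l=k$, else $0$); for $i<j$, $\pi^{ij}=\sum_{k,l}\pi^{ij}_{k,l}\delta(x^i_k,x^j_l)\in\Pi(\mu^i,\mu^j)$ is an optimal plan for the cost $\|x-y\|^2$; and $\pi^{ji}_{l,k}\coloneqq\pi^{ij}_{k,l}$. *)

From HB Require Import structures.
From mathcomp Require Import all_boot all_order all_algebra.
From mathcomp Require Import classical_sets reals.
Set Implicit Arguments. Unset Strict Implicit. Unset Printing Implicit Defensive.
Import Order.TTheory GRing.Theory Num.Theory.
Local Open Scope ring_scope.
Local Open Scope classical_set_scope.

(* A finitely supported measure on R^d is given by atoms indexed by a finite
   type I: weights w : I -> R at points x : I -> 'rV[R]_d
   (the measure is \sum_k w k delta(x k); points may repeat). *)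

Definition sqdist {R : realType} {d : nat} (a b : 'rV[R]_d) : R :=
  \sum_(t < d) (a 0 t - b 0 t) ^+ 2.

Definition is_prob {R : realType} {I : finType} (w : I -> R) : Prop :=
  (forall k, 0 <= w k) /\ \sum_k w k = 1.

Definition is_coupling {R : realType} {I J : finType}
  (w : I -> R) (v : J -> R) (pi : I -> J -> R) : Prop :=
  (forall k l, 0 <= pi k l) /\
  (forall k, \sum_l pi k l = w k) /\ (forall l, \sum_k pi k l = v l).

Definition tcost {R : realType} {d : nat} {I J : finType}
  (x : I -> 'rV[R]_d) (y : J -> 'rV[R]_d) (pi : I -> J -> R) : R :=
  \sum_k \sum_l pi k l * sqdist (x k) (y l).

(* W_2^2 : minimal transport cost over couplings (written as an infimum;
   the minimum is attained for finitely supported measures). *)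
Definition W2sq {R : realType} {d : nat} {I J : finType}
  (w : I -> R) (x : I -> 'rV[R]_d) (v : J -> R) (y : J -> 'rV[R]_d) : R :=
  inf [set c | exists pi, is_coupling w v pi /\ c = tcost x y pi].

Definition mass {R : realType} {d : nat} {I : finType}
  (w : I -> R) (x : I -> 'rV[R]_d) (y : 'rV[R]_d) : R :=
  \sum_(k | x k == y) w k.

Definition Psi2 {R : realType} {d N : nat} (lam : 'I_N -> R)
  (n : 'I_N -> nat) (mu : forall i, 'I_(n i) -> R)
  (x : forall i, 'I_(n i) -> 'rV[R]_d)
  {J : finType} (v : J -> R) (y : J -> 'rV[R]_d) : R :=
  \sum_(i < N) lam i * W2sq v y (mu i) (x i).

From HB Require Import structures.
From mathcomp Require Import all_boot all_order all_algebra.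
From mathcomp Require Import classical_sets reals.
From mathcomp Require Import boolp ring lra.
Import Order.TTheory GRing.Theory Num.Theory.
Local Open Scope ring_scope.

(* Write B = sum_(i<j) lam_i lam_j W_2^2(mu^i, mu^j) and
   A = sum_i lam_i sum_k mu^i_k |m^i_k - x^i_k|^2.
   For any probability measure nu, gluing near-optimal couplings of nu with the
   mu^i and using that the mean squared pairwise distance of a weighted point
   cloud is at most twice its mean squared distance to any fixed point gives
   B <= Psi_2(nu).  Conversely, the plans pi^ij assemble into couplings of the
   output measure with each mu^j; since m^i_k is the barycenter of the points
   x^j_l weighted by lam_j pi^ij_kl, the variance identity shows that their
   total cost is sum_(i,j) lam_i lam_j W_2^2(mu^i, mu^j) - A = 2B - A.
   Hence Psi_2(output) / Psi_2(nu) <= (2B - A) / B. *)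

Section SumReindexing.
Context {V : nmodType}.

Lemma sum_sigma (I : finType) (K : I -> finType) (F : {i : I & K i} -> V) :
  \sum_p F p = \sum_i \sum_(k : K i) F (Tagged K k).
Proof.
rewrite (@sig_big_dep V 0 +%R I K xpredT (fun _ => xpredT)
  (fun i (k : K i) => F (Tagged K k))).
by apply: eq_bigr => -[i k].
Qed.

Lemma sum_ord_sym_pairs {N : nat} {f : 'I_N -> 'I_N -> V} :
  (forall i j, f i j = f j i) ->
  \sum_i \sum_j f i j =
  (\sum_(i < N) \sum_(j < N | (i < j)%N) f i j) *+ 2 + \sum_i f i i.
Proof.
move=> fC.
have split_row (i : 'I_N) : \sum_j f i j =
    \sum_(j < N | (i < j)%N) f i j + f i i + \sum_(j < N | (j < i)%N) f i j.
  rewrite (bigID (fun j : 'I_N => (i < j)%N)) /= -addrA; congr (_ + _).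
  rewrite (bigD1 i) /= ?ltnn //; congr (_ + _); apply: eq_bigl => j.
  by rewrite -leqNgt ltn_neqAle andbC.
rewrite (eq_bigr _ (fun i _ => split_row i)) !big_split /=.
have -> : \sum_(i < N) \sum_(j < N | (j < i)%N) f i j =
          \sum_(i < N) \sum_(j < N | (i < j)%N) f i j.
  by rewrite (exchange_big_dep xpredT) //=; apply: eq_bigr => i _;
    apply: eq_bigr => j _; exact: fC.
by rewrite mulr2n addrAC.
Qed.

End SumReindexing.

Section PairwiseSpread.
Context {R : realDomainType}.

Lemma sum_pair_sqr_le (I : finType) (w u : I -> R) (c : R) :
  (forall p, 0 <= w p) ->
  \sum_p \sum_q w p * w q * (u p - u q) ^+ 2 <=
  2 * (\sum_p w p) * \sum_p w p * (c - u p) ^+ 2.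
Proof.
move=> w0; pose e p := c - u p.
have -> : \sum_p \sum_q w p * w q * (u p - u q) ^+ 2 =
    (\sum_p w p * e p ^+ 2) * (\sum_q w q) + (\sum_p w p) * (\sum_q w q * e q ^+ 2)
    - 2 * ((\sum_p w p * e p) * (\sum_q w q * e q)).
  rewrite !big_distrlr mulr_sumr -big_split -sumrB /=; apply: eq_bigr => p _.
  rewrite mulr_sumr -big_split -sumrB /=; apply: eq_bigr => q _.
  by rewrite /e; ring.
have := sqr_ge0 (\sum_p w p * e p); rewrite /e; nra.
Qed.

End PairwiseSpread.

Section SquaredDistance.
Context {R : realType} {d : nat}.
Implicit Types a b m : 'rV[R]_d.

Lemma sqdist_ge0 a b : 0 <= sqdist a b.
Proof. by apply: sumr_ge0 => t _; rewrite sqr_ge0. Qed.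

Lemma sqdistC a b : sqdist a b = sqdist b a.
Proof. by apply: eq_bigr => t _; rewrite -sqrrN opprB. Qed.

Lemma sqdistxx a : sqdist a a = 0.
Proof. by rewrite /sqdist big1 // => t _; rewrite subrr expr0n. Qed.

Lemma sum_pair_sqdist_le {I : finType} (w : I -> R) (a : I -> 'rV[R]_d) b :
  (forall p, 0 <= w p) ->
  \sum_p \sum_q w p * w q / (\sum_r w r) * sqdist (a p) (a q) <=
  2 * \sum_p w p * sqdist b (a p).
Proof.
move=> w0; set W := \sum_r w r; set S := \sum_p w p * sqdist b (a p).
have S0 : 0 <= S by apply: sumr_ge0 => p _; rewrite mulr_ge0 ?sqdist_ge0.
have spread : \sum_p \sum_q w p * w q * sqdist (a p) (a q) <= 2 * W * S.
  have -> : 2 * W * S = \sum_t 2 * W * \sum_p w p * (b 0 t - a p 0 t) ^+ 2.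
    rewrite -mulr_sumr /S /sqdist; congr (_ * _).
    by under eq_bigr do rewrite mulr_sumr; exact: exchange_big.
  rewrite /sqdist.
  under eq_bigr => p _ do under eq_bigr => q _ do rewrite mulr_sumr.
  under eq_bigr => p _ do rewrite exchange_big.
  rewrite exchange_big.
  by apply: ler_sum => t _; exact: sum_pair_sqr_le.
have -> : \sum_p \sum_q w p * w q / W * sqdist (a p) (a q) =
    W^-1 * \sum_p \sum_q w p * w q * sqdist (a p) (a q).
  rewrite mulr_sumr; apply: eq_bigr => p _; rewrite mulr_sumr.
  by apply: eq_bigr => q _; rewrite mulrAC mulrC !mulrA.
have [->|W_neq0] := eqVneq W 0; first by rewrite invr0 mul0r mulr_ge0.
apply: le_trans (ler_wpM2l _ spread) _; first by rewrite invr_ge0 sumr_ge0.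
by rewrite [2 * W * S]mulrAC mulrC mulfK.
Qed.

Lemma sum_sqdist_barycenter {I : finType} (c : I -> R) (z : I -> 'rV[R]_d) m a :
  (\sum_q c q) *: m = \sum_q c q *: z q ->
  \sum_q c q * sqdist m (z q) =
  \sum_q c q * sqdist a (z q) - (\sum_q c q) * sqdist m a.
Proof.
move=> bary; set M := \sum_q c q.
have bary_t t : M * m 0 t = \sum_q c q * z q 0 t.
  have := congr1 (fun v : 'rV[R]_d => v 0 t) bary.
  by rewrite summxE mxE => ->; apply: eq_bigr => q _; rewrite mxE.
rewrite /sqdist mulr_sumr.
under eq_bigr => q _ do rewrite mulr_sumr.
under [in RHS]eq_bigr => q _ do rewrite mulr_sumr.
rewrite exchange_big [in RHS]exchange_big -sumrB; apply: eq_bigr => t _.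
transitivity (\sum_q (c q * (a 0 t - z q 0 t) ^+ 2 - c q * (m 0 t - a 0 t) ^+ 2
                     + 2 * (a 0 t - m 0 t) * (c q * z q 0 t - c q * m 0 t))).
  by apply: eq_bigr => q _; ring.
rewrite big_split sumrB /= -mulr_sumr sumrB -!mulr_suml -/M -bary_t subrr mulr0 addr0.
by rewrite -sqrrN opprB.
Qed.

End SquaredDistance.

Definition glue {R : realType} {J I1 I2 : finType} (nuw : J -> R)
  (g1 : J -> I1 -> R) (g2 : J -> I2 -> R) : I1 -> I2 -> R :=
  fun k l => \sum_y g1 y k * g2 y l / nuw y.

Section Couplings.
Context {R : realType}.

Lemma is_coupling_transpose {I J : finType} {w : I -> R} {v : J -> R}
    {g : I -> J -> R} :
  is_coupling w v g -> is_coupling v w (fun l k => g k l).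
Proof. by case=> g0 [rows cols]; split=> [l k|]; [exact: g0|split]. Qed.

Lemma is_coupling_diag {I : finType} {w : I -> R} {g : I -> I -> R} :
  (forall k, 0 <= w k) -> (forall k l, g k l = if k == l then w k else 0) ->
  is_coupling w w g.
Proof.
move=> w0 gE; split; [|split].
- by move=> k l; rewrite gE; case: eqP.
- move=> k; rewrite (bigD1 k) //= gE eqxx big1 ?addr0 // => l lk.
  by rewrite gE eq_sym (negbTE lk).
- move=> l; rewrite (bigD1 l) //= gE eqxx big1 ?addr0 // => k kl.
  by rewrite gE (negbTE kl).
Qed.

Lemma is_coupling_prod {I J : finType} {w : I -> R} {v : J -> R} :
  is_prob w -> is_prob v -> is_coupling w v (fun k l => w k * v l).
Proof.
case=> w0 w1 [v0 v1]; split; [|split].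
- by move=> k l; rewrite mulr_ge0.
- by move=> k; rewrite -mulr_sumr v1 mulr1.
- by move=> l; rewrite -mulr_suml w1 mul1r.
Qed.

Lemma is_coupling_glue {J I1 I2 : finType} {nuw : J -> R} {w1 : I1 -> R}
    {w2 : I2 -> R} {g1 : J -> I1 -> R} {g2 : J -> I2 -> R} :
  is_coupling nuw w1 g1 -> is_coupling nuw w2 g2 ->
  is_coupling w1 w2 (glue nuw g1 g2).
Proof.
move=> [g1_ge0 [rows1 cols1]] [g2_ge0 [rows2 cols2]].
have nu_ge0 y : 0 <= nuw y by rewrite -rows1 sumr_ge0.
(* a coupling vanishes on atoms of nuw of zero mass, so dividing by them is harmless *)
have divK (I : finType) (g : J -> I -> R) y k : (forall y k, 0 <= g y k) ->
    (forall y, \sum_k g y k = nuw y) -> g y k / nuw y * nuw y = g y k.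
  move=> g_ge0 rows; have [nu0|nu_neq0] := eqVneq (nuw y) 0; last by rewrite divfK.
  have /psumr_eq0P gy0 : \sum_k g y k = 0 by rewrite rows.
  by rewrite nu0 mulr0 gy0.
split; [|split].
- by move=> k l; apply: sumr_ge0 => y _; rewrite mulr_ge0 ?invr_ge0 ?mulr_ge0.
- move=> k; rewrite /glue exchange_big -cols1; apply: eq_bigr => y _.
  under eq_bigr => l _ do rewrite mulrAC.
  by rewrite -mulr_sumr rows2 divK.
- move=> l; rewrite /glue exchange_big -cols2; apply: eq_bigr => y _.
  under eq_bigr => k _ do rewrite [g1 y k * _]mulrC mulrAC.
  by rewrite -mulr_sumr rows1 divK.
Qed.

Lemma is_coupling_mixture {I : finType} {K : I -> finType} {J : finType}
    {lam : I -> R} {w : forall i, K i -> R} {v : J -> R}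
    {g : forall i, K i -> J -> R} :
  (forall i, 0 <= lam i) -> \sum_i lam i = 1 ->
  (forall i, is_coupling (w i) v (g i)) ->
  is_coupling (fun p => lam (tag p) * w (tag p) (tagged p)) v
              (fun p l => lam (tag p) * g (tag p) (tagged p) l).
Proof.
move=> lam0 lam1 cpl; split; [|split].
- by move=> p l; rewrite mulr_ge0 //; case: (cpl (tag p)) => g0 _; exact: g0.
- by move=> p; rewrite -mulr_sumr (cpl (tag p)).2.1.
- move=> l; rewrite sum_sigma /=.
  under eq_bigr => i _ do rewrite -mulr_sumr (cpl i).2.2.
  by rewrite -mulr_suml lam1 mul1r.
Qed.

End Couplings.

Section TransportCost.
Context {R : realType} {d : nat}.

Lemma tcost_ge0 {I J : finType} (x : I -> 'rV[R]_d) (y : J -> 'rV[R]_d)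
    {g : I -> J -> R} :
  (forall k l, 0 <= g k l) -> 0 <= tcost x y g.
Proof.
by move=> g0; apply: sumr_ge0 => k _; apply: sumr_ge0 => l _;
  rewrite mulr_ge0 ?sqdist_ge0.
Qed.

Lemma tcost_transpose {I J : finType} (x : I -> 'rV[R]_d) (y : J -> 'rV[R]_d)
    (g : I -> J -> R) :
  tcost y x (fun l k => g k l) = tcost x y g.
Proof.
rewrite /tcost exchange_big; apply: eq_bigr => k _; apply: eq_bigr => l _.
by rewrite sqdistC.
Qed.

Lemma tcost_diag {I : finType} (x : I -> 'rV[R]_d) {w : I -> R} {g : I -> I -> R} :
  (forall k l, g k l = if k == l then w k else 0) -> tcost x x g = 0.
Proof.
move=> gE; rewrite /tcost big1 // => k _; rewrite big1 // => l _.
by rewrite gE; case: eqP => [->|_]; rewrite ?sqdistxx ?mulr0 ?mul0r.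
Qed.

Lemma W2sq_le_tcost {I J : finType} {w : I -> R} {v : J -> R}
    (x : I -> 'rV[R]_d) (y : J -> 'rV[R]_d) {g : I -> J -> R} :
  is_coupling w v g -> W2sq w x v y <= tcost x y g.
Proof.
move=> cpl; apply: ge_inf; last by exists g.
by exists 0 => c [g' [cpl' ->]]; exact: tcost_ge0 cpl'.1.
Qed.

Lemma W2sq_ge0 {I J : finType} {w : I -> R} {v : J -> R}
    (x : I -> 'rV[R]_d) (y : J -> 'rV[R]_d) {g : I -> J -> R} :
  is_coupling w v g -> 0 <= W2sq w x v y.
Proof.
move=> cpl; apply: lb_le_inf; first by exists (tcost x y g), g.
by move=> c [g' [cpl' ->]]; exact: tcost_ge0 cpl'.1.
Qed.

Lemma W2sq_nearly_attained {I J : finType} {w : I -> R} {v : J -> R}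
    (x : I -> 'rV[R]_d) (y : J -> 'rV[R]_d) {g : I -> J -> R} {e : R} :
  is_coupling w v g -> 0 < e ->
  exists g', is_coupling w v g' /\ tcost x y g' <= W2sq w x v y + e.
Proof.
move=> cpl e_gt0.
have costs_inf : has_inf [set c | exists g, is_coupling w v g /\ c = tcost x y g].
  split; first by exists (tcost x y g), g.
  by exists 0 => c [g' [cpl' ->]]; exact: tcost_ge0 cpl'.1.
have [c [g' [cpl' ->]] lt_c] := inf_adherent e_gt0 costs_inf.
by exists g'; split => //; exact: ltW.
Qed.

End TransportCost.

Lemma ratio_le_two_sub {R : realFieldType} (P Q A B : R) :
  0 <= A -> 0 <= P -> B <= Q -> P <= 2 * B - A -> P / Q <= 2 - A / B.
Proof.
move=> A_ge0 P_ge0 le_BQ le_P.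
have [B_le0|B_gt0] := lerP B 0.
  have -> : P = 0 by apply/eqP; rewrite eq_le P_ge0 andbT; lra.
  have : A / B <= 0 by rewrite mulr_ge0_le0 // invr_le0.
  rewrite mul0r; lra.
have Q_gt0 : 0 < Q by exact: lt_le_trans le_BQ.
apply: (@le_trans _ _ (P / B)); first by rewrite ler_wpM2l // lef_pV2.
have -> : 2 - A / B = (2 * B - A) / B by field; rewrite gt_eqF.
by rewrite ler_wpM2r // invr_ge0 ltW.
Qed.

Section MultiMarginal.
Context {R : realType} {d N : nat} {lam : 'I_N -> R} {n : 'I_N -> nat}.
Context {mu : forall i, 'I_(n i) -> R} {x : forall i, 'I_(n i) -> 'rV[R]_d}.
Hypotheses (lam_ge0 : forall i, 0 <= lam i) (lam_sum1 : \sum_i lam i = 1).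

Lemma sum_glue_tcost_le {J : finType} {nuw : J -> R} (nux : J -> 'rV[R]_d)
    {gam : forall i, J -> 'I_(n i) -> R} :
  (forall i, is_coupling nuw (mu i) (gam i)) ->
  \sum_i \sum_j lam i * lam j * tcost (x i) (x j) (glue nuw (gam i) (gam j))
  <= 2 * \sum_i lam i * tcost nux (x i) (gam i).
Proof.
move=> cpl.
pose w y (p : {i : 'I_N & 'I_(n i)}) := lam (tag p) * gam (tag p) y (tagged p).
pose z (p : {i : 'I_N & 'I_(n i)}) := x (tag p) (tagged p).
have w_ge0 y p : 0 <= w y p by rewrite mulr_ge0 // (cpl (tag p)).1.
have w_sum y : \sum_p w y p = nuw y.
  rewrite sum_sigma /w /=.
  under eq_bigr => i _ do rewrite -mulr_sumr (cpl i).2.1.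
  by rewrite -mulr_suml lam_sum1 mul1r.
have -> : \sum_i \sum_j lam i * lam j * tcost (x i) (x j) (glue nuw (gam i) (gam j))
    = \sum_y \sum_p \sum_q w y p * w y q / (\sum_r w y r) * sqdist (z p) (z q).
  under [RHS]eq_bigr => y _ do rewrite w_sum.
  rewrite [RHS]exchange_big; under [RHS]eq_bigr => p _ do rewrite exchange_big.
  rewrite [RHS]sum_sigma.
  under [RHS]eq_bigr => i _ do under eq_bigr => k _ do rewrite sum_sigma.
  apply: eq_bigr => i _; rewrite [RHS]exchange_big; apply: eq_bigr => j _.
  rewrite /tcost mulr_sumr; apply: eq_bigr => k _.
  rewrite mulr_sumr; apply: eq_bigr => l _.
  by rewrite /glue mulr_suml mulr_sumr; apply: eq_bigr => y _; rewrite /w /z /=; ring.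
have -> : 2 * \sum_i lam i * tcost nux (x i) (gam i)
    = \sum_y 2 * \sum_p w y p * sqdist (nux y) (z p).
  rewrite -mulr_sumr; congr (_ * _).
  under [RHS]eq_bigr => y _ do rewrite sum_sigma.
  rewrite [RHS]exchange_big; apply: eq_bigr => i _.
  rewrite /tcost mulr_sumr; apply: eq_bigr => y _.
  by rewrite mulr_sumr; apply: eq_bigr => k _; rewrite /w /z /=; ring.
by apply: ler_sum => y _; exact: sum_pair_sqdist_le.
Qed.

Lemma sum_W2sq_pairs_le_Psi2 {J : finType} {nuw : J -> R} {nux : J -> 'rV[R]_d} :
  is_prob nuw -> (forall i, is_prob (mu i)) ->
  \sum_(i < N) \sum_(j < N | (i < j)%N) lam i * lam j * W2sq (mu i) (x i) (mu j) (x j)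
  <= Psi2 lam mu x nuw nux.
Proof.
move=> nu_prob mu_prob; apply/ler_addgt0Pr => e e_gt0.
have near_opt i : exists g, is_coupling nuw (mu i) g /\
    tcost nux (x i) g <= W2sq nuw nux (mu i) (x i) + e.
  exact (W2sq_nearly_attained nux (x i) (is_coupling_prod nu_prob (mu_prob i)) e_gt0).
pose gam i := proj1_sig (cid (near_opt i)).
have [gam_cpl gam_cost] : (forall i, is_coupling nuw (mu i) (gam i)) /\
    (forall i, tcost nux (x i) (gam i) <= W2sq nuw nux (mu i) (x i) + e).
  by split=> i; case: (proj2_sig (cid (near_opt i))).
pose D i j := lam i * lam j * tcost (x i) (x j) (glue nuw (gam i) (gam j)).
have D_sym i j : D i j = D j i.
  rewrite /D [lam j * _]mulrC -tcost_transpose; congr (_ * _); apply: eq_bigr => k _.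
  apply: eq_bigr => l _; congr (_ * _); apply: eq_bigr => y _.
  by rewrite [gam i y l * _]mulrC.
have diag_ge0 : 0 <= \sum_i D i i.
  apply: sumr_ge0 => i _; rewrite mulr_ge0 ?mulr_ge0 //.
  exact: tcost_ge0 _ _ _ (is_coupling_glue (gam_cpl i) (gam_cpl i)).1.
have W2sq_le_D : \sum_(i < N) \sum_(j < N | (i < j)%N)
      lam i * lam j * W2sq (mu i) (x i) (mu j) (x j)
    <= \sum_(i < N) \sum_(j < N | (i < j)%N) D i j.
  apply: ler_sum => i _; apply: ler_sum => j _; rewrite ler_wpM2l ?mulr_ge0 //.
  exact: W2sq_le_tcost _ _ (is_coupling_glue (gam_cpl i) (gam_cpl j)).
have D_le : \sum_i \sum_j D i j <= 2 * (Psi2 lam mu x nuw nux + e).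
  apply: le_trans (sum_glue_tcost_le nux gam_cpl) _; rewrite ler_pM2l //.
  rewrite /Psi2 -[e]mul1r -lam_sum1 mulr_suml -big_split /=.
  by apply: ler_sum => i _; rewrite -mulrDr ler_wpM2l.
move: D_le; rewrite (sum_ord_sym_pairs D_sym) mulr2n; lra.
Qed.

Section Plans.
Context { pi : forall i j, 'I_(n i) -> 'I_(n j) -> R}.

Lemma is_coupling_plans :
  (forall i k, 0 <= mu i k) ->
  (forall i k l, pi i i k l = if k == l then mu i k else 0) ->
  (forall i j : 'I_N, (i < j)%N -> is_coupling (mu i) (mu j) (pi i j)) ->
  (forall (i j : 'I_N) k l, (j < i)%N -> pi i j k l = pi j i l k) ->
  forall i j, is_coupling (mu i) (mu j) (pi i j).
Proof.
move=> mu_ge0 pi_diag pi_lt_cpl pi_sym i j.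
case: (ltngtP i j) => [lt_ij|lt_ji|eq_ij]; first exact: pi_lt_cpl.
- have -> : pi i j = fun k l => pi j i l k.
    by apply/funext => k; apply/funext => l; exact: pi_sym.
  exact: is_coupling_transpose (pi_lt_cpl j i lt_ji).
- have -> : j = i by apply/val_inj/esym.
  exact: is_coupling_diag.
Qed.

Lemma sum_tcost_optimal_plans :
  (forall i k l, pi i i k l = if k == l then mu i k else 0) ->
  (forall i j : 'I_N, (i < j)%N ->
     tcost (x i) (x j) (pi i j) = W2sq (mu i) (x i) (mu j) (x j)) ->
  (forall (i j : 'I_N) k l, (j < i)%N -> pi i j k l = pi j i l k) ->
  \sum_i \sum_j lam i * lam j * tcost (x i) (x j) (pi i j) =
  2 * \sum_(i < N) \sum_(j < N | (i < j)%N)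
        lam i * lam j * W2sq (mu i) (x i) (mu j) (x j).
Proof.
move=> pi_diag pi_opt pi_sym.
have cost_sym (i j : 'I_N) : (i < j)%N ->
    tcost (x j) (x i) (pi j i) = tcost (x i) (x j) (pi i j).
  move=> lt_ij; rewrite -tcost_transpose; apply: eq_bigr => k _.
  by apply: eq_bigr => l _; rewrite pi_sym.
have weighted_sym i j : lam i * lam j * tcost (x i) (x j) (pi i j) =
    lam j * lam i * tcost (x j) (x i) (pi j i).
  rewrite [lam j * _]mulrC.
  by case: (ltngtP i j) => [/cost_sym ->|/cost_sym ->|/val_inj ->].
rewrite (sum_ord_sym_pairs weighted_sym) [X in _ + X]big1 ?addr0 => [|i _]; last first.
  by rewrite (tcost_diag _ (pi_diag i)) mulr0.
rewrite mulr_natl; congr (_ *+ 2); apply: eq_bigr => i _; apply: eq_bigr => j lt_ij.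
by rewrite pi_opt.
Qed.

Section PairwiseOutput.
Context {m : forall i, 'I_(n i) -> 'rV[R]_d}.
Hypotheses (mu_gt0 : forall i k, 0 < mu i k)
  (pi_cpl : forall i j, is_coupling (mu i) (mu j) (pi i j))
  (m_def : forall i k, m i k =
     \sum_j lam j *: \sum_(l < n j) (pi i j k l / mu i k) *: x j l).

Let coef i k (q : {j : 'I_N & 'I_(n j)}) := lam (tag q) * pi i (tag q) k (tagged q).
Let pt (q : {j : 'I_N & 'I_(n j)}) := x (tag q) (tagged q).

Let sum_coef_plans (F : forall i, 'I_(n i) -> forall j, 'I_(n j) -> R) :
  \sum_i lam i * \sum_k \sum_q coef i k q * F i k (tag q) (tagged q) =
  \sum_i \sum_j lam i * lam j * \sum_k \sum_l pi i j k l * F i k j l.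
Proof.
apply: eq_bigr => i _; rewrite mulr_sumr.
under eq_bigr => k _ do rewrite sum_sigma mulr_sumr.
rewrite exchange_big; apply: eq_bigr => j _; rewrite mulr_sumr; apply: eq_bigr => k _.
by rewrite !mulr_sumr; apply: eq_bigr => l _; rewrite /coef /=; ring.
Qed.

Lemma Psi2_output_le :
  Psi2 lam mu x (fun p : {i : 'I_N & 'I_(n i)} => lam (tag p) * mu (tag p) (tagged p))
                (fun p => m (tag p) (tagged p))
  <= \sum_i \sum_j lam i * lam j * tcost (x i) (x j) (pi i j)
     - \sum_i lam i * \sum_k mu i k * sqdist (m i k) (x i k).
Proof.
pose G j (p : {i : 'I_N & 'I_(n i)}) l := lam (tag p) * pi (tag p) j (tagged p) l.
have G_cpl j : is_coupling (fun p => lam (tag p) * mu (tag p) (tagged p)) (mu j) (G j).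
  exact: is_coupling_mixture lam_ge0 lam_sum1 (fun i => pi_cpl i j).
have coef_sum i k : \sum_q coef i k q = mu i k.
  rewrite sum_sigma /coef /=.
  under eq_bigr => j _ do rewrite -mulr_sumr (pi_cpl i j).2.1.
  by rewrite -mulr_suml lam_sum1 mul1r.
have coef_bary i k : (\sum_q coef i k q) *: m i k = \sum_q coef i k q *: pt q.
  rewrite coef_sum m_def scaler_sumr sum_sigma; apply: eq_bigr => j _.
  rewrite scalerA scaler_sumr; apply: eq_bigr => l _.
  by rewrite scalerA /coef /=; congr (_ *: _); field; rewrite gt_eqF.
apply: (le_trans (ler_sum _ (fun j _ => ler_wpM2l (lam_ge0 j)
  (W2sq_le_tcost (fun p => m (tag p) (tagged p)) (x j) (G_cpl j))))).
have -> : \sum_j lam j * tcost (fun p => m (tag p) (tagged p)) (x j) (G j) =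
    \sum_i lam i * \sum_k \sum_q coef i k q * sqdist (m i k) (pt q).
  rewrite (sum_coef_plans (fun i k j l => sqdist (m i k) (x j l))) exchange_big.
  apply: eq_bigr => j _; rewrite /tcost sum_sigma mulr_sumr; apply: eq_bigr => i _.
  rewrite !mulr_sumr; apply: eq_bigr => k _; rewrite !mulr_sumr; apply: eq_bigr => l _.
  by rewrite /G /=; ring.
under eq_bigr => i _ do under eq_bigr => k _ do
  rewrite (sum_sqdist_barycenter _ _ _ (x i k) (coef_bary i k)) coef_sum.
under eq_bigr => i _ do rewrite sumrB mulrBr.
by rewrite sumrB (sum_coef_plans (fun i k j l => sqdist (x i k) (x j l))).
Qed.

End PairwiseOutput.
End Plans.
End MultiMarginal.

Theorem mainTheorem7 (R : realType) (d N : nat) (HN : (2 <= N)%N)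
  (lam : 'I_N -> R)
  (Hlam : (forall i, 0 < lam i < 1) /\ \sum_(i < N) lam i = 1)
  (n : 'I_N -> nat) (mu : forall i, 'I_(n i) -> R)
  (x : forall i, 'I_(n i) -> 'rV[R]_d)
  (Hmu : forall i, (forall k, 0 < mu i k) /\ \sum_k mu i k = 1)
  (Hx : forall i, injective (x i))
  (Hneq : exists i j y, mass (mu i) (x i) y <> mass (mu j) (x j) y)
  (pi : forall i j, 'I_(n i) -> 'I_(n j) -> R)
  (Hii : forall i k l, pi i i k l = if k == l then mu i k else 0)
  (Hopt : forall i j : 'I_N, (i < j)%N ->
     is_coupling (mu i) (mu j) (pi i j) /\
     tcost (x i) (x j) (pi i j) = W2sq (mu i) (x i) (mu j) (x j))
  (Hsym : forall (i j : 'I_N) k l, (j < i)%N -> pi i j k l = pi j i l k)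
  (m : forall i, 'I_(n i) -> 'rV[R]_d)
  (Hm : forall i k, m i k =
     \sum_(j < N) lam j *: \sum_(l < n j) (pi i j k l / mu i k) *: x j l)
  (J : finType) (nuw : J -> R) (nux : J -> 'rV[R]_d)
  (Hnu_prob : is_prob nuw)
  (Hnu_opt : forall (J' : finType) (w' : J' -> R) (y' : J' -> 'rV[R]_d),
     is_prob w' -> Psi2 lam mu x nuw nux <= Psi2 lam mu x w' y') :
  let tw := fun p : {i : 'I_N & 'I_(n i)} => lam (tag p) * mu (tag p) (tagged p) in
  let tx := fun p : {i : 'I_N & 'I_(n i)} => m (tag p) (tagged p) in
  Psi2 lam mu x tw tx / Psi2 lam mu x nuw nux <=
  2 - (\sum_(i < N) lam i * \sum_(k < n i) mu i k * sqdist (m i k) (x i k)) /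
      (\sum_(i < N) \sum_(j < N | (i < j)%N) lam i * lam j * W2sq (mu i) (x i) (mu j) (x j)).
Proof.
cbv zeta; case: Hlam => lam_bounds lam_sum1.
have lam_ge0 i : 0 <= lam i by case/andP: (lam_bounds i) => /ltW.
have mu_prob i : is_prob (mu i).
  by split; [move=> k; exact: ltW ((Hmu i).1 k) | exact: (Hmu i).2].
have pi_cpl := is_coupling_plans (fun i => (mu_prob i).1) Hii
  (fun i j ij => (Hopt i j ij).1) Hsym.
apply: ratio_le_two_sub.
- apply: sumr_ge0 => i _; rewrite mulr_ge0 // sumr_ge0 // => k _.
  by rewrite mulr_ge0 ?sqdist_ge0 // (mu_prob i).1.
- apply: sumr_ge0 => j _; rewrite mulr_ge0 //.
  exact: W2sq_ge0 _ _ (is_coupling_mixture lam_ge0 lam_sum1 (fun i => pi_cpl i j)).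
- exact (sum_W2sq_pairs_le_Psi2 lam_ge0 lam_sum1 Hnu_prob mu_prob).
- rewrite -(sum_tcost_optimal_plans Hii (fun i j ij => (Hopt i j ij).2) Hsym).
  exact (Psi2_output_le lam_ge0 lam_sum1 (fun i => (Hmu i).1) pi_cpl Hm).
Qed.
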